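(* Let $\alpha\neq\beta$ with $\alpha\neq0$, and let $(g_n)$ be as in the context. Then, as formal power series in $T$, $$\sum_{n\ge0}g_n(\alpha)\,T^n=\frac{1+T(\alpha-\beta)-\sqrt{1-2T(\alpha+\beta)+T^2(\alpha-\beta)^2}}{2T\alpha},$$ where the square root denotes the formal power series with constant term $1$.
   Context: Fix complex numbers $\alpha\neq\beta$. Define polynomials $g_n(x)\in\mathbb{C}[x]$ recursively by $g_0(x)=1$ and, for $n\ge1$, $$(x-\alpha)(\alpha-\beta)^{n-1}g_n(x)=\alpha(x-\beta)^n g_{n-1}(\alpha)-x(\alpha-\beta)^n g_{n-1}(x).$$ (The right-hand side vanishes at $x=\alpha$, so it is divisible by $x-\alpha$ and $g_n$ is a uniquely determined polynomial.) *)

From HB Require Import structures.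
From mathcomp Require Import all_boot all_order all_algebra.
Set Implicit Arguments. Unset Strict Implicit. Unset Printing Implicit Defensive.
Import Order.TTheory GRing.Theory Num.Theory.
Local Open Scope ring_scope.

(* Formal power series over a ring R in the variable T are represented by
   their coefficient sequences  nat -> R  (coefficient of T^n at n). *)
Definition fps (R : Type) := nat -> R.

Definition fps_mul (R : nzRingType) (f g : fps R) : fps R :=
  fun n => \sum_(i < n.+1) f i * g (n - i)%N.

Definition fps_of_poly (R : nzRingType) (p : {poly R}) : fps R :=
  fun n => p`_n.

From HB Require Import structures.
From mathcomp Require Import all_boot all_order all_algebra.
From mathcomp Require Import ring zify.
Import Order.TTheory GRing.Theory Num.Theory.
Set Implicit Arguments. Unset Strict Implicit.
Local Open Scope ring_scope.

(* Kernel method.  Writing x = beta + d y with d = alpha - beta, the recurrence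
   becomes (y - 1) g_(k+1)(x) = alpha y^(k+1) g_k(alpha) - x g_k(x), so the
   bivariate series F(x, T) = sum_k g_k(x) T^k satisfies
     (y - 1 + x T) F = y - 1 + alpha y T G(y T),   G(T) = sum_k g_k(alpha) T^k.
   Cancelling the kernel with y = (1 - beta T) / (1 + d T) gives
   (1 - beta T) G(u) = 1 for u = y T, and eliminating T between these two
   relations shows alpha T G^2 - (1 + d T) G + 1 = 0.  Hence
   1 + d T - 2 alpha T G squares to the discriminant and has constant term 1,
   so it is the square root.  Everything is carried out on polynomial
   truncations, modulo powers of X. *)

Section TruncatedPoly.
Variable F : fieldType.
Implicit Types p q v : {poly F}.

Lemma dvdXn_coef p n k : 'X^n %| p -> (k < n)%N -> p`_k = 0.
Proof. by move=> /dvdpP[q ->] lt_kn; rewrite coefMXn lt_kn. Qed.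

Lemma dvdXn_mull k q p : q.[0] != 0 -> ('X^k %| q * p) = ('X^k %| p).
Proof. by move=> q0; rewrite Gauss_dvdpr // coprimep_expl // coprimep_sym coprimepX. Qed.

Lemma dvdXn_comp k v p : v.[0] != 0 -> 'X^k %| p \Po ('X * v) -> 'X^k %| p.
Proof.
move=> v0; elim: k p => [|k IHk] p; first by rewrite expr0 !dvd1p.
move=> dvd_comp; have /dvdpP[q def_p] : 'X^k %| p.
  by apply: IHk; apply: dvdp_trans _ dvd_comp; apply: dvdp_exp2l.
move: dvd_comp; rewrite def_p comp_polyM rmorphXn /= comp_polyX exprMn.
rewrite mulrCA exprSr [q * _]mulrC !dvdp_mul2l ?expf_neq0 ?polyX_eq0 //.
have dvdX r : ('X %| r) = (r.[0] == 0) by rewrite -[X in X %| _]subr0 dvdp_XsubCl.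
rewrite !dvdX hornerM horner_exp horner_comp !hornerE mulf_eq0 expf_eq0 (negbTE v0).
by rewrite andbF orbF.
Qed.

End TruncatedPoly.

Lemma fps_sqr_inj (R : idomainType) (a b : fps R) n :
  2%:R != 0 :> R -> a 0%N = 1 -> b 0%N = 1 ->
  (forall k, (k < n)%N -> fps_mul a a k = fps_mul b b k) ->
  forall k, (k < n)%N -> a k = b k.
Proof.
move=> two_neq0 a0 b0 sqr_ab; elim/ltn_ind => -[_ _|k IHk lt_kn]; first by rewrite a0 b0.
move: (sqr_ab _ lt_kn) => /eqP; rewrite -subr_eq0 -sumrB big_ord_recl big_ord_recr /=.
rewrite subn0 subnn a0 b0 big1 ?add0r => [|i _]; last first.
  have lt_ik := ltn_ord i; rewrite /bump /= add1n.
  by rewrite (IHk i.+1) ?(IHk (k.+1 - i.+1)%N) ?subrr //; lia.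
rewrite !mul1r !mulr1 -mulr2n -mulr_natl mulf_eq0 (negbTE two_neq0).
by rewrite subr_eq0 => /eqP.
Qed.

Section KernelMethod.
Variables (F : fieldType) (alpha beta : F) (g : nat -> {poly F}).
Hypothesis alpha_neq_beta : alpha != beta.
Hypothesis alpha_neq0 : alpha != 0.
Hypothesis g0 : g 0%N = 1.
Hypothesis g_rec : forall n : nat, (0 < n)%N ->
  ('X - alpha%:P) * ((alpha - beta) ^+ n.-1)%:P * g n
  = alpha%:P * ('X - beta%:P) ^+ n * ((g n.-1).[alpha])%:P
    - 'X * ((alpha - beta) ^+ n)%:P * g n.-1.

Local Notation d := (alpha - beta).

Definition trunc_series n : {poly F} := \poly_(k < n) (g k).[alpha].

Definition quadratic p : {poly F} :=
  alpha%:P * 'X * p ^+ 2 - (1 + d%:P * 'X) * p + 1.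

(* kernel_root n truncates (1 - beta X) / (1 + d X), the root y of the kernel
   y - 1 + kernel_point y * X. *)
Definition kernel_point y : {poly F} := beta%:P + d%:P * y.

Definition kernel_root n : {poly F} :=
  (1 - beta%:P * 'X) * \sum_(i < n) (- d%:P * 'X) ^+ i.

Lemma rec_kernel_point y k :
  (y - 1) * (g k.+1 \Po kernel_point y)
  = alpha%:P * y ^+ k.+1 * ((g k).[alpha])%:P - kernel_point y * (g k \Po kernel_point y).
Proof.
set x := kernel_point y; set D := d%:P.
have D_neq0 : D ^+ k.+1 != 0 by rewrite expf_neq0 // polyC_eq0 subr_eq0.
apply: (mulIf D_neq0); have := congr1 (comp_poly x) (@g_rec k.+1 (ltn0Sn k)).
rewrite /= !(comp_polyB, comp_polyM) [_ ^+ _ \Po _]rmorphXn /=.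
rewrite !(comp_polyB, comp_polyX, comp_polyC) !polyC_exp -/D.
have -> : x - beta%:P = D * y by rewrite /x /kernel_point; ring.
rewrite exprMn !exprS => rec.
by apply: etrans (etrans _ rec) _; rewrite /x /kernel_point /D; ring.
Qed.

Lemma kernel_identity y n :
  alpha%:P * ('X * y) * (trunc_series n \Po ('X * y))
  = (y - 1) * ('X^n * (g n \Po kernel_point y) - 1)
    + (y * (1 + d%:P * 'X) - (1 - beta%:P * 'X))
      * \sum_(k < n) 'X^k * (g k \Po kernel_point y).
Proof.
set x := kernel_point y; set u := 'X * y.
set a := fun k => 'X^k * (g k \Po x); set K := y * _ - _.
have step k : (y - 1) * (a k.+1 - a k)
              = alpha%:P * u ^+ k.+1 * ((g k).[alpha])%:P - K * a k.
  have -> : (y - 1) * (a k.+1 - a k)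
            = 'X^(k.+1) * ((y - 1) * (g k.+1 \Po x)) - (y - 1) * a k by rewrite /a; ring.
  by rewrite rec_kernel_point -/x /a /K /u /x /kernel_point exprMn !exprS; ring.
have series_u : trunc_series n \Po u = \sum_(k < n) (g k).[alpha] *: u ^+ k.
  rewrite /trunc_series poly_def rmorph_sum; apply: eq_bigr => k _.
  by rewrite -[LHS]/(_ \Po u) comp_polyZ rmorphXn /= comp_polyX.
have a0 : a 0%N = 1 by rewrite /a g0 comp_polyC mul1r.
have tele : 'X^n * (g n \Po x) - 1 = \sum_(k < n) (a k.+1 - a k).
  by rewrite -(big_mkord xpredT (fun k => a k.+1 - a k)) telescope_sumr // a0.
rewrite tele mulr_sumr; under eq_bigr do rewrite step.
rewrite sumrB mulr_sumr subrK series_u mulr_sumr; apply: eq_bigr => k _.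
by rewrite exprS -mul_polyC; ring.
Qed.

Lemma kernel_root_mul n :
  kernel_root n * (1 + d%:P * 'X)
  = (1 - beta%:P * 'X) * (1 - (- d%:P * 'X) ^+ n).
Proof.
rewrite /kernel_root -mulrA; congr (_ * _).
by rewrite mulrC -[1 - _]opprB subrX1 -mulNr; congr (_ * _); ring.
Qed.

Lemma kernel_root0 n : (kernel_root n.+1).[0] = 1.
Proof.
have := congr1 (horner^~ 0) (kernel_root_mul n.+1).
by rewrite /= !hornerE /= !subr0 !mul1r expr0n subr0.
Qed.

Lemma series_comp_kernel_root n :
  'X^n %| (1 - beta%:P * 'X) * (trunc_series n.+1 \Po ('X * kernel_root n.+1)) - 1.
Proof.
set y := kernel_root n.+1; set S := trunc_series _ \Po _.
have K := kernel_identity y n.+1; rewrite -/S in K.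
move: K; set aN := 'X^(n.+1) * _; set A := \sum_(k < n.+1) _ => K.
set e := (- d%:P * 'X) ^+ n.+1.
have yZ : y * (1 + d%:P * 'X) = (1 - beta%:P * 'X) * (1 - e) by rewrite kernel_root_mul.
(* (1 + d X) times the kernel identity, corrected using yZ. *)
have E : alpha%:P * 'X * ((1 - beta%:P * 'X) * S - 1)
    = (1 + d%:P * 'X) * (alpha%:P * ('X * y) * S
         - ((y - 1) * (aN - 1) + (y * (1 + d%:P * 'X) - (1 - beta%:P * 'X)) * A))
      + (y * (1 + d%:P * 'X) - (1 - beta%:P * 'X) * (1 - e))
        * (aN - 1 + (1 + d%:P * 'X) * A - alpha%:P * 'X * S)
      + e * (1 - beta%:P * 'X) * (alpha%:P * 'X * S - aN + 1 - (1 + d%:P * 'X) * A)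
      - alpha%:P * 'X * aN.
  by rewrite polyCB; ring.
move: E; rewrite K yZ !subrr mulr0 mul0r !add0r => E.
have Xn1_e : 'X^(n.+1) %| e by rewrite /e exprMn dvdp_mull.
have : 'X^(n.+1) %| alpha%:P * 'X * ((1 - beta%:P * 'X) * S - 1).
  by rewrite E dvdp_sub //; [do 2 apply: dvdp_mulr | apply: dvdp_mull; apply: dvdp_mulr].
by rewrite exprS [alpha%:P * 'X]mulrC -mulrA dvdp_mul2l ?polyX_eq0 // dvdXn_mull ?hornerC.
Qed.

Lemma quadratic_comp_kernel_root n :
  'X^n %| quadratic (trunc_series n.+1) \Po ('X * kernel_root n.+1).
Proof.
set y := kernel_root n.+1; set u := 'X * y; pose S := trunc_series n.+1 \Po u.
set sigma := (1 - beta%:P * 'X) * S - 1.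
set eps := u * (1 + d%:P * 'X) - 'X * (1 - beta%:P * 'X).
have Xn_sigma : 'X^n %| sigma := series_comp_kernel_root n.
have Xn_eps : 'X^n %| eps.
  rewrite /eps /u -mulrA kernel_root_mul.
  set e := (- d%:P * 'X) ^+ n.+1.
  have -> : 'X * ((1 - beta%:P * 'X) * (1 - e)) - 'X * (1 - beta%:P * 'X)
            = - ((1 - beta%:P * 'X) * 'X * e) by ring.
  by rewrite dvdpNr dvdp_mull // /e exprMn dvdp_mull // dvdp_exp2l.
(* Both sigma and eps vanish for the exact kernel root, and the quadratic
   vanishes when they do. *)
have E : (1 + d%:P * 'X) * (1 - beta%:P * 'X) ^+ 2
           * (quadratic (trunc_series n.+1) \Po u)
    = sigma * (alpha%:P * 'X * (1 - beta%:P * 'X) * (2%:R + sigma)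
               - (1 + d%:P * 'X + d%:P * 'X * (1 - beta%:P * 'X)) * (1 - beta%:P * 'X))
      + eps * (alpha%:P * (1 + sigma) ^+ 2 - d%:P * (1 - beta%:P * 'X) * (1 + sigma)).
  have -> : quadratic (trunc_series n.+1) \Po u
            = alpha%:P * u * S ^+ 2 - (1 + d%:P * u) * S + 1.
    by rewrite /quadratic !expr2 !(comp_polyB, comp_polyD, comp_polyM, comp_polyC, comp_polyX).
  by rewrite /sigma /eps /u polyCB; ring.
rewrite -(@dvdXn_mull _ n ((1 + d%:P * 'X) * (1 - beta%:P * 'X) ^+ 2)).
  by rewrite E dvdp_add // dvdp_mulr.
by rewrite !hornerE /= subr0 expr1n oner_eq0.
Qed.

Lemma quadratic_trunc n : 'X^n %| quadratic (trunc_series n.+1).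
Proof.
apply: (dvdXn_comp (v := kernel_root n.+1)); last exact: quadratic_comp_kernel_root.
by rewrite kernel_root0 oner_eq0.
Qed.

Lemma quadratic_discriminant p :
  (1 + d *: 'X - (2 * alpha) *: 'X * p) ^+ 2
    - (1 - (2 * (alpha + beta)) *: 'X + (d ^+ 2) *: 'X ^+ 2)
  = (4 * alpha) *: ('X * quadratic p).
Proof. by rewrite /quadratic -!mul_polyC !(polyCM, polyCD, polyCB, polyC_exp); ring. Qed.

End KernelMethod.

Theorem mainTheorem2 (C : numClosedFieldType) (alpha beta : C)
    (g : nat -> {poly C}) :
  alpha != beta -> alpha != 0 ->
  g 0%N = 1 ->
  (forall n : nat, (0 < n)%N ->
     ('X - alpha%:P) * ((alpha - beta) ^+ n.-1)%:P * g n
     = alpha%:P * ('X - beta%:P) ^+ n * ((g n.-1).[alpha])%:P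
       - 'X * ((alpha - beta) ^+ n)%:P * g n.-1) ->
  forall s : fps C,
    s 0%N = 1 ->
    fps_mul s s = fps_of_poly (1 - (2 * (alpha + beta)) *: 'X
                                 + ((alpha - beta) ^+ 2) *: 'X ^+ 2) ->
    forall n : nat,
      fps_mul (fps_of_poly ((2 * alpha) *: 'X)) (fun k => (g k).[alpha]) n
      = fps_of_poly (1 + (alpha - beta) *: 'X) n - s n.
Proof.
move=> neq_ab alpha_neq0 g0 g_rec s s0 s_sqr n.
set f := 1 + (alpha - beta) *: 'X - (2 * alpha) *: 'X * trunc_series alpha g n.+1.
have f_sqr : 'X^(n.+1) %| f ^+ 2 - (1 - (2 * (alpha + beta)) *: 'X
                                  + ((alpha - beta) ^+ 2) *: 'X ^+ 2).
  rewrite quadratic_discriminant dvdpZr ?mulf_neq0 ?pnatr_eq0 // exprS dvdp_mul2l ?polyX_eq0 //.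
  exact: quadratic_trunc.
have s_f : forall k, (k < n.+1)%N -> s k = f`_k.
  apply: fps_sqr_inj => //; first by rewrite pnatr_eq0.
    by rewrite -horner_coef0 !hornerE /= subr0.
  move=> k lt_kn; rewrite s_sqr /fps_mul -coefM -expr2; apply/eqP.
  by rewrite eq_sym -subr_eq0 -coefB (dvdXn_coef f_sqr).
rewrite s_f // /fps_of_poly /f coefB opprB addrC subrK coefM /fps_mul.
by apply: eq_bigr => i _; rewrite coef_poly ltnS leq_subr.
Qed.
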